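(* Let $R$ be a UFD and $\mathfrak p$ a prime ideal of $R$ such that $R$ is complete with respect to some $\mathfrak p$-filtration of $R$. Let $f\in R[X]$ be $\mathfrak p$-distinguished (of some order) with $f_0\neq0$, and let $\Phi=(\Phi_0,\Phi_1,\dots,\Phi_l)$ be a prime factorization of $f$ in $R[X]$, indexed so that for $i>0$ the constant term $(\Phi_i)_0$ is a unit in $R$ if and only if $i>k$, where $k\ge0$. Let $u$ be the leading coefficient of $\Phi_1\cdots\Phi_k$. Then $(u^{-1},\Phi_1,\dots,\Phi_k)$ is a prime factorization of $P_f$ in $R[X]$. Moreover $U_f\in R[X]$, and $(u\Phi_0,\Phi_{k+1},\Phi_{k+2},\dots,\Phi_l)$ is a prime factorization of $U_f$ in $R[X]$.
   Context: A $\mathfrak p$-filtration is a descending sequence of ideals each containing a power of $\mathfrak p$; $R$ is complete with respect to it if $R\to\varprojlim R/\mathfrak f_i$ is an isomorphism. $f$ is $\mathfrak p$-distinguished of order $n$ if its coefficients $f_i$ lie in $\mathfrak p$ for $i<n$ and $f_n$ is a unit mod $\mathfrak p$; then $f=U_fP_f$ with $P_f\in R[X]$ the unique monic polynomial of degree $n$ with non-leading coefficients in $\mathfrak p$ and $U_f\in R[[X]]$ a unit. A prime factorization of an element $a$ of a ring $S$ is a sequence $(\pi_0,\pi_1,\dots,\pi_k)$ with $a=\pi_0\pi_1\cdots\pi_k$, $\pi_0$ a unit of $S$ and $\pi_i$ prime in $S$ for $i>0$. *)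

From HB Require Import structures.
From mathcomp Require Import all_boot all_order all_algebra.
Set Implicit Arguments. Unset Strict Implicit. Unset Printing Implicit Defensive.
Import Order.TTheory GRing.Theory Num.Theory.
Local Open Scope ring_scope.

Section Defs.
Variable R : comUnitRingType.

Definition dvdr (a b : R) : Prop := exists c : R, b = c * a.

Definition prime_elt (p : R) : Prop :=
  p != 0 /\ ~ (p \is a GRing.unit) /\
  forall a b : R, dvdr p (a * b) -> dvdr p a \/ dvdr p b.

Definition prime_factorization (s : seq R) (a : R) : Prop :=
  exists (pi0 : R) (rest : seq R),
    s = pi0 :: rest /\ pi0 \is a GRing.unit /\
    (forall q, q \in rest -> prime_elt q) /\
    a = pi0 * \prod_(q <- rest) q.

Definition is_ideal (I : R -> Prop) : Prop :=
  I 0 /\ (forall x y, I x -> I y -> I (x + y)) /\ (forall a x, I x -> I (a * x)).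

Definition prime_ideal (P : R -> Prop) : Prop :=
  is_ideal P /\ ~ P 1 /\ forall a b, P (a * b) -> P a \/ P b.

Fixpoint ideal_pow (P : R -> Prop) (n : nat) : R -> Prop :=
  match n with
  | 0 => fun _ => True
  | n'.+1 => fun x => exists s : seq (R * R),
      (forall ab, ab \in s -> ideal_pow P n' ab.1 /\ P ab.2) /\
      x = \sum_(ab <- s) ab.1 * ab.2
  end.

Definition p_filtration (P : R -> Prop) (F : nat -> R -> Prop) : Prop :=
  (forall i, is_ideal (F i)) /\
  (forall i x, F i.+1 x -> F i x) /\
  (forall i, exists n, forall x, ideal_pow P n x -> F i x).

(* R -> lim R/F_i is bijective (injective and surjective) *)
Definition complete_wrt (F : nat -> R -> Prop) : Prop :=
  (forall x, (forall i, F i x) -> x = 0) /\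
  (forall xs : nat -> R, (forall i j, (i <= j)%N -> F i (xs j - xs i)) ->
     exists x, forall i, F i (x - xs i)).

Definition pser := nat -> R.
Definition pser_mul (f g : pser) : pser :=
  fun n => \sum_(i < n.+1) f i * g (n - i)%N.
Definition pser_one : pser := fun n => if n == 0%N then 1 else 0.
Definition pser_unit (f : pser) : Prop :=
  exists g : pser, forall n, pser_mul f g n = pser_one n.
Definition poly_pser (p : {poly R}) : pser := fun n => p`_n.

Definition p_distinguished (P : R -> Prop) (f : {poly R}) (n : nat) : Prop :=
  (forall i, (i < n)%N -> P f`_i) /\ (exists a : R, P (a * f`_n - 1)).

End Defs.

Definition UFD (R : idomainType) : Prop :=
  forall a : R, a != 0 -> exists s : seq R, prime_factorization s a.

From HB Require Import structures.
From mathcomp Require Import all_boot all_order all_algebra.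
From mathcomp Require Import zify ring.
Import Order.TTheory GRing.Theory Num.Theory.
Set Implicit Arguments. Unset Strict Implicit.
Local Open Scope ring_scope.

(* Dividing f by the monic polynomial P_f leaves a remainder r of degree < n
   with f = q P_f + r; then (U_f - q) P_f = r, and comparing coefficients shows
   inductively that every coefficient of U_f - q lies in every power of p, so
   U_f = q by completeness.  Hence f = U_f P_f with U_f a polynomial whose
   constant term is a unit.  A prime factor of f with non-unit constant term
   cannot divide U_f, while one with unit constant term cannot divide P_f (its
   cofactor would have all coefficients below degree n in p, including its
   leading one, forcing 1 in p).  Primality then splits the factorization. *)

Section Ideals.

Variables (R : comUnitRingType) (I : R -> Prop).
Hypothesis idI : is_ideal I.

Lemma ideal0 : I 0.
Proof. by case: idI. Qed.

Lemma idealD x y : I x -> I y -> I (x + y).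
Proof. by case: idI => _ [+ _]; apply. Qed.

Lemma idealMl a x : I x -> I (a * x).
Proof. by case: idI => _ [_]; apply. Qed.

Lemma idealN x : I x -> I (- x).
Proof. by rewrite -mulN1r; apply: idealMl. Qed.

Lemma ideal_sum (J : Type) (r : seq J) (Q : pred J) (G : J -> R) :
  (forall j, Q j -> I (G j)) -> I (\sum_(j <- r | Q j) G j).
Proof. by move=> IG; apply: big_ind => //; [exact: ideal0 | exact: idealD]. Qed.

End Ideals.

Lemma ideal_pow_ideal (R : comUnitRingType) (P : R -> Prop) k :
  is_ideal (ideal_pow P k).
Proof.
elim: k => [|k IH] /=; first by [].
split; first by exists [::]; rewrite big_nil.
split.
  move=> x y [s1 [s1P ->]] [s2 [s2P ->]]; exists (s1 ++ s2); rewrite big_cat.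
  by split=> // ab; rewrite mem_cat => /orP [/s1P|/s2P].
move=> a x [s [sP ->]]; exists [seq (a * ab.1, ab.2) | ab <- s]; split.
  by move=> _ /mapP [ab /sP [Pab1 Pab2] ->]; split=> //; apply: idealMl.
by rewrite big_map mulr_sumr; apply: eq_bigr => ab _; rewrite mulrA.
Qed.

Lemma ideal_powSM (R : comUnitRingType) (P : R -> Prop) k x y :
  ideal_pow P k x -> P y -> ideal_pow P k.+1 (x * y).
Proof.
by move=> Px Py; exists [:: (x, y)]; rewrite big_seq1; split=> // ab /[!inE] /eqP ->.
Qed.

Lemma prime_ideal_unit (R : comUnitRingType) (P : R -> Prop) x :
  prime_ideal P -> x \is a GRing.unit -> ~ P x.
Proof.
move=> [idP [P1 _]] ux Px; apply: P1; rewrite -(mulVr ux); exact: idealMl.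
Qed.

Section WeierstrassUniqueness.

Variables (R : comUnitRingType) (P : R -> Prop) (F : nat -> R -> Prop).
Variables (D : {poly R}) (n : nat).
Hypotheses (filtF : p_filtration P F) (complF : complete_wrt F).
Hypotheses (monD : D \is monic) (sizeD : size D = n.+1)
  (coefD : forall i, (i < n)%N -> P D`_i).

(* The coefficient of degree m + n of V * D is V_m plus terms V_i D_(m+n-i)
   with i > m, whose factor D_(m+n-i) lies in p. *)
Lemma pser_mul_small_ideal_pow (V : pser R) (r : {poly R}) :
  (size r <= n)%N -> (forall m, pser_mul V (poly_pser D) m = r`_m) ->
  forall k m, ideal_pow P k (V m).
Proof.
move=> sr eqVr; elim=> [//|k IHk] m.
have coefD_n : D`_n = 1 by move/monicP: monD; rewrite lead_coefE sizeD.
have lt_m : (m < (m + n).+1)%N by rewrite ltnS leq_addr.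
have := eqVr (m + n)%N; rewrite nth_default; last exact: leq_trans sr (leq_addl _ _).
rewrite /pser_mul /poly_pser (bigD1 (Ordinal lt_m)) //= addKn coefD_n mulr1.
move/eqP; rewrite addr_eq0 => /eqP ->.
have idPk := ideal_pow_ideal P k.+1.
apply/(idealN idPk)/(ideal_sum idPk).
move=> i neq_im; have [lt_im|le_mi] := ltnP i m.
  rewrite nth_default ?mulr0; first exact: ideal0.
  by rewrite sizeD; lia.
apply: ideal_powSM; first exact: IHk.
have ne_im : i != m :> nat by apply: contraNneq neq_im => eq_im; apply/eqP/val_inj.
apply: coefD; have := ltn_ord i; lia.
Qed.

Lemma pser_mul_small_eq0 (V : pser R) (r : {poly R}) :
  (size r <= n)%N -> (forall m, pser_mul V (poly_pser D) m = r`_m) ->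
  forall m, V m = 0.
Proof.
move=> sr eqVr m; case: complF filtF => sepF _ [_ [_ powF]].
apply: sepF => i; have [k sub_k] := powF i.
exact/sub_k/(pser_mul_small_ideal_pow sr eqVr).
Qed.

Lemma pser_mul_poly (p q : {poly R}) m :
  pser_mul (poly_pser p) (poly_pser q) m = (p * q)`_m.
Proof. by rewrite coefM. Qed.

Lemma weierstrass_unit_poly (f : {poly R}) (U : pser R) :
  (forall m, pser_mul U (poly_pser D) m = f`_m) ->
  (forall m, U m = (Pdiv.CommonRing.rdivp f D)`_m) /\
  f = Pdiv.CommonRing.rdivp f D * D.
Proof.
move=> eqUf; set q := Pdiv.CommonRing.rdivp f D.
set r := Pdiv.CommonRing.rmodp f D.
have eqf : f = q * D + r := Pdiv.RingMonic.rdivp_eq monD f.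
have sr : (size r <= n)%N.
  by have := Pdiv.CommonRing.ltn_rmodpN0 f (monic_neq0 monD); rewrite sizeD.
have eqVr m : pser_mul (fun i => U i - q`_i) (poly_pser D) m = r`_m.
  have -> : r = f - q * D by rewrite eqf addrAC subrr add0r.
  rewrite coefB -eqUf -pser_mul_poly -sumrB.
  by apply: eq_bigr => i _; rewrite mulrBl.
have Vq := pser_mul_small_eq0 sr eqVr.
have eqUq m : U m = q`_m by apply/eqP; rewrite -subr_eq0 Vq.
split=> //; rewrite [LHS]eqf -[RHS]addr0; congr (_ + _).
apply/polyP => m; rewrite coef0 -eqVr; apply: big1 => i _.
by rewrite Vq mul0r.
Qed.

End WeierstrassUniqueness.

Lemma pser_unit_coef0 (R : comUnitRingType) (U : pser R) :
  pser_unit U -> U 0%N \is a GRing.unit.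
Proof.
move=> [V eqUV]; apply/unitrPr; exists (V 0%N).
by have := eqUV 0%N; rewrite /pser_mul big_ord1.
Qed.

Lemma cofactor_coef_prime_ideal (R : comUnitRingType) (P : R -> Prop)
    (D c q : {poly R}) n :
  prime_ideal P -> D = c * q -> q`_0 \is a GRing.unit ->
  (forall i, (i < n)%N -> P D`_i) -> forall i, (i < n)%N -> P c`_i.
Proof.
move=> primeP eqD q0u coefD; have [idP [_ primP]] := primeP.
elim/ltn_ind => i IHi lt_in.
set S := \sum_(j < i) q`_(lift ord0 j) * c`_(i - lift ord0 j).
have PS : P S.
  apply: (ideal_sum idP) => j _; apply/(idealMl idP)/IHi; last lia.
  by rewrite /= /bump /=; have := ltn_ord j; lia.
have : P (q`_0 * c`_i + S).
  by have := coefD i lt_in; rewrite eqD mulrC coefM big_ord_recl subn0.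
move=> /(idealD idP) /(_ (idealN idP PS)); rewrite addrK.
by case/primP => // /(prime_ideal_unit primeP q0u).
Qed.

Lemma prime_coef0_unit_ndvdr (R : idomainType) (P : R -> Prop) (D q : {poly R}) n :
  prime_ideal P -> D \is monic -> size D = n.+1 ->
  (forall i, (i < n)%N -> P D`_i) ->
  prime_elt q -> q`_0 \is a GRing.unit -> ~ dvdr q D.
Proof.
move=> primeP monD sizeD coefD [_ [qNu _]] q0u [c eqD].
have coefc := cofactor_coef_prime_ideal primeP eqD q0u coefD.
have c_neq0 : c != 0 by apply: contra_eq_neq eqD => ->; rewrite mul0r monic_neq0.
have size_q : (1 < size q)%N.
  rewrite ltnNge; apply/negP => le_q1; apply: qNu.
  rewrite poly_unitE q0u andbT eqn_leq le_q1 size_poly_gt0.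
  by apply: contraTneq q0u => ->; rewrite coef0 unitr0.
have size_c : (size c <= n)%N.
  have q_neq0 : q != 0 by rewrite -size_poly_gt0; lia.
  by have := sizeD; rewrite eqD size_mul //; lia.
have /coefc Plc : ((size c).-1 < n)%N by rewrite -size_poly_gt0 in c_neq0; lia.
apply: (prime_ideal_unit primeP (unitr1 R)).
move/monicP: monD; rewrite eqD lead_coefM => <-.
by rewrite mulrC; apply: (idealMl (proj1 primeP)).
Qed.

Lemma dvdr_prod_primes_cancel (R : idomainType) (L : seq R) x y :
  (forall q, q \in L -> prime_elt q /\ ~ dvdr q y) ->
  dvdr (\prod_(q <- L) q) (x * y) -> dvdr (\prod_(q <- L) q) x.
Proof.
elim: L x => [|q L IH] x primeL.
  by move=> _; exists x; rewrite big_nil mulr1.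
rewrite big_cons => [[c eqxy]].
have [[q_neq0 [_ primeq]] qNy] := primeL q (mem_head _ _).
have : dvdr q (x * y) by exists (c * \prod_(j <- L) j); rewrite eqxy mulrA mulrAC.
case/primeq => [[x' eqx]|//].
have dvdLx'y : dvdr (\prod_(j <- L) j) (x' * y).
  exists c; apply: (mulIf q_neq0).
  by rewrite mulrAC -eqx eqxy mulrA mulrAC.
have [d eqx'] := IH x' (fun j Lj => primeL j (mem_behead (s := q :: L) Lj)) dvdLx'y.
by exists d; rewrite eqx eqx' mulrA mulrAC.
Qed.

Lemma prime_factorization_split (R : idomainType) (U D phi : {poly R})
    (A B : seq {poly R}) :
  D \is monic -> phi \is a GRing.unit -> (forall q, q \in A ++ B -> prime_elt q) ->
  (forall q, q \in A -> ~ dvdr q U) -> (forall q, q \in B -> ~ dvdr q D) ->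
  U * D = phi * \prod_(q <- A ++ B) q ->
  let u := lead_coef (\prod_(q <- A) q) in
  prime_factorization ((u^-1)%:P :: A) D /\ prime_factorization (u%:P * phi :: B) U.
Proof.
move=> monD phiu primeAB ndvdA ndvdB eqUD u.
have primeA q : q \in A -> prime_elt q by move=> qA; apply: primeAB; rewrite mem_cat qA.
have primeB q : q \in B -> prime_elt q.
  by move=> qB; apply: primeAB; rewrite mem_cat qB orbT.
rewrite big_cat /= in eqUD.
have ab_neq0 : (\prod_(q <- A) q) * (\prod_(q <- B) q) != 0.
  by rewrite -big_cat prodf_seq_neq0; apply/allP => q /primeAB [qn0 _].
set a := \prod_(q <- A) q in eqUD ab_neq0 u *.
set b := \prod_(q <- B) q in eqUD ab_neq0 *.
have [s eqD] : dvdr a D.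
  apply: (@dvdr_prod_primes_cancel _ A D U) => [q qA|].
    by split; [exact: primeA | exact: ndvdA].
  by exists (phi * b); rewrite [D * U]mulrC eqUD -/a mulrA mulrAC.
have [t eqU] : dvdr b U.
  apply: (@dvdr_prod_primes_cancel _ B U D) => [q qB|].
    by split; [exact: primeB | exact: ndvdB].
  by exists (phi * a); rewrite eqUD mulrA.
have eqphi : phi = t * s.
  by apply: (mulIf ab_neq0); rewrite -eqUD eqU eqD; ring.
have su : s \is a GRing.unit by move: phiu; rewrite eqphi unitrM => /andP [].
have eqs0 : s = (s`_0)%:P.
  by apply: size1_polyC; move: su; rewrite poly_unitE => /andP [/eqP -> _].
have s0u : s`_0 * u = 1.
  by move/monicP: monD; rewrite eqD lead_coefM {1}eqs0 lead_coefC.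
have uu : u \is a GRing.unit by apply/unitrPr; exists s`_0; rewrite mulrC.
have eqs : s = (u^-1)%:P by rewrite eqs0 -[s`_0](mulrK uu) s0u mul1r.
split.
  exists (u^-1)%:P, A; split=> //; split; first by rewrite -eqs.
  by split=> //; rewrite eqD eqs.
exists (u%:P * phi), B; split=> //; split.
  by rewrite unitrM phiu andbT rmorph_unit.
split=> //.
by rewrite eqU eqphi eqs mulrCA -polyCM mulrV // mulr1.
Qed.

Theorem proposition5p3 (R : idomainType) (P : R -> Prop) (F : nat -> R -> Prop)
    (f : {poly R}) (n : nat) (Phi0 : {poly R}) (A B : seq {poly R})
    (Pf : {poly R}) (Uf : pser R) :
  UFD R -> prime_ideal P -> p_filtration P F -> complete_wrt F ->
  p_distinguished P f n -> f`_0 != 0 ->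
  (* Pf, Uf : the Weierstrass data of f *)
  Pf \is monic -> size Pf = n.+1 -> (forall i, (i < n)%N -> P Pf`_i) ->
  pser_unit Uf -> (forall m, pser_mul Uf (poly_pser Pf) m = f`_m) ->
  (* Phi = (Phi0, A = Phi_1..Phi_k, B = Phi_{k+1}..Phi_l) *)
  prime_factorization (Phi0 :: A ++ B) f ->
  (forall q, q \in A -> ~ (q`_0 \is a GRing.unit)) ->
  (forall q, q \in B -> q`_0 \is a GRing.unit) ->
  let u := lead_coef (\prod_(q <- A) q) in
  prime_factorization ((u^-1)%:P :: A) Pf /\
  exists Up : {poly R}, (forall m, Uf m = Up`_m) /\
    prime_factorization ((u%:P * Phi0) :: B) Up.
Proof.
move=> _ primeP filtF complF _ _ monPf sizePf coefPf unitUf eqUf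
  [_ [_ [[<- <-] [Phi0u [primeAB eqf]]]]] A_coef0 B_coef0 u.
have [eqUq eqfq] := weierstrass_unit_poly filtF complF monPf sizePf coefPf eqUf.
set Up := Pdiv.CommonRing.rdivp f Pf in eqUq eqfq.
have Up0u : Up`_0 \is a GRing.unit by rewrite -eqUq; exact: pser_unit_coef0.
have ndvdA q : q \in A -> ~ dvdr q Up.
  move=> qA [c eqUp]; apply: (A_coef0 q qA).
  by move: Up0u; rewrite eqUp coef0M unitrM => /andP [].
have ndvdB q : q \in B -> ~ dvdr q Pf.
  move=> qB; apply: (prime_coef0_unit_ndvdr primeP monPf sizePf coefPf _ (B_coef0 q qB)).
  by apply: primeAB; rewrite mem_cat qB orbT.
have eqUPf : Up * Pf = Phi0 * \prod_(q <- A ++ B) q by rewrite -eqfq.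
have [factPf factUp] :=
  prime_factorization_split monPf Phi0u primeAB ndvdA ndvdB eqUPf.
by split=> //; exists Up.
Qed.
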